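(* If $\diamondsuit$ holds, then the space $\sigma(2^{\omega_1})=\{x\in 2^{\omega_1}:|x^{-1}(1)|<\omega\}$, as a subspace of the Cantor cube $2^{\omega_1}$, is not discretely discretely generated.
   Context: A space $X$ is discretely discretely generated (DDG) if for every set $A\subseteq X$ and every discrete set $D\subseteq\overline{A}$ there is a discrete set $E\subseteq A$ with $D\subseteq\overline{E}$. $\diamondsuit$ is Jensen's diamond principle. *)

From HB Require Import structures.
From mathcomp Require Import all_boot all_order all_algebra.
From mathcomp Require Import all_classical all_reals all_analysis.
Set Implicit Arguments. Unset Strict Implicit. Unset Printing Implicit Defensive.
Local Open Scope classical_set_scope.

(** [lt] is a strict well-order on [W] whose order type is omega_1:
    [W] is uncountable and every proper initial segment is countable. *)
Definition is_omega1 (W : Type) (lt : W -> W -> Prop) : Prop :=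
  (forall x, ~ lt x x) /\
  (forall x y z, lt x y -> lt y z -> lt x z) /\
  (forall x y, lt x y \/ x = y \/ lt y x) /\
  well_founded lt /\
  ~ countable [set: W] /\
  (forall x, countable [set y | lt y x]).

(** [C] is closed and unbounded in omega_1. Closed: whenever
    alpha > 0 and [C] is cofinal below alpha (i.e. sup (C ∩ alpha) = alpha),
    alpha ∈ C. *)
Definition club (W : Type) (lt : W -> W -> Prop) (C : set W) : Prop :=
  (forall a, exists c, C c /\ lt a c) /\
  (forall a, (exists b, lt b a) ->
     (forall b, lt b a -> exists c, [/\ C c, lt b c & lt c a]) -> C a).

Definition stationary (W : Type) (lt : W -> W -> Prop) (S : set W) : Prop :=
  forall C, club lt C -> exists a, C a /\ S a.

Definition diamond (W : Type) (lt : W -> W -> Prop) : Prop :=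
  exists A : W -> set W,
    (forall a, A a `<=` [set b | lt b a]) /\
    (forall X : set W,
       stationary lt [set a | X `&` [set b | lt b a] = A a]).

Definition discrete_subset (T : topologicalType) (D : set T) : Prop :=
  forall x, D x -> exists U : set T, [/\ open U, U x & U `&` D = [set x]].

Definition DDG (T : topologicalType) : Prop :=
  forall (A D : set T), discrete_subset D -> D `<=` closure A ->
    exists E : set T, [/\ E `<=` A, discrete_subset E & D `<=` closure E].

Definition cantor_cube (W : Type) := prod_topology (fun _ : W => bool).

Definition sigma_set (W : Type) : set (cantor_cube W) :=
  [set x | finite_set [set w | x w = true]].

From HB Require Import structures.
From mathcomp Require Import all_boot all_order all_algebra.
From mathcomp Require Import all_classical all_reals all_analysis.
From Stdlib Require List.
Set Implicit Arguments. Unset Strict Implicit. Unset Printing Implicit Defensive.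
Local Open Scope classical_set_scope.

(* Points of sigma(2^omega_1) are indicators of finite subsets of omega_1.  For
   a successor a = l + n with l limit, a finite set G a containing a and l is
   built by recursion: it also contains G b_n, where (b_n) is a sequence of
   successors in the diamond guess at l with pairwise disjoint G-values, if the
   guess contains one.  As n grows, G (l + n) converges to {l}, so the discrete
   set D of singletons of limits lies in the closure of A = {G a}.
   If a discrete E included in A had D in its closure, the set X of indices of
   E would contain such disjoint sequences, hence so would the guess X /\ d at
   stationarily many limits d; there some point of E containing d agrees below
   d with G b for some b < d in X.  By pressing down, one b serves cofinally
   many d, and these points of E accumulate at the point G b of E. *)

Lemma finite_set_list T (S : set T) (l : list T) :
  (forall x, S x -> List.In x l) -> finite_set S.
Proof.
move=> Sl; apply: (sub_finite_set Sl); elim: l {Sl} => [|a l IH].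
  by apply: (sub_finite_set (B := set0)) => // x [].
apply: (sub_finite_set (B := [set a] `|` [set x | List.In x l])).
  by move=> x /= [->|h]; [left|right].
by rewrite finite_setU; split => //; exact: finite_set1.
Qed.

Lemma countable_setU T (A B : set T) :
  countable A -> countable B -> countable (A `|` B).
Proof.
move=> cA cB; have -> : A `|` B = \bigcup_(i in [set: bool]) (if i then A else B).
  apply/seteqP; split => x; first by case=> h; [exists true | exists false].
  by case=> -[] _ h; [left | right].
by apply: bigcup_countable; [exact: countableP | case].
Qed.

Lemma trivIset_eventually_disjoint T (F : nat -> set T) (l : list T) :
  trivIset setT F -> exists N, forall n, (N <= n)%N -> forall k, List.In k l -> ~ F n k.
Proof.
move=> tF; elim: l => [|a l [N IH]]; first by exists 0%N => n _ k [].
have [[m Fma]|Fa] := pselect (exists m, F m a).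
  exists (maxn N m.+1) => n; rewrite geq_max => /andP [Nn mn] k [<- Fna|]; last exact: IH.
  by have /= nm := tF n m I I (ex_intro _ a (conj Fna Fma)); rewrite nm ltnn in mn.
exists N => n Nn k [<- Fna|]; [by apply: Fa; exists n | exact: IH].
Qed.

(* Greedy construction: the n-th term avoids the finitely many points used so far. *)
Lemma trivIset_seq_avoiding T I (P : I -> Prop) (F : I -> set T) :
  (forall i, exists l, forall x, F i x -> List.In x l) ->
  (forall U : list T, exists i, P i /\ forall k, List.In k U -> ~ F i k) ->
  exists f : nat -> I, (forall n, P (f n)) /\ trivIset setT (F \o f).
Proof.
move=> Ffin avoid.
pose next U := proj1_sig (cid (avoid U)).
have next_P U : P (next U) by case: (proj2_sig (cid (avoid U))).
have next_avoid U k : List.In k U -> ~ F (next U) k.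
  by case: (proj2_sig (cid (avoid U))) => _; exact.
pose supp i := proj1_sig (cid (Ffin i)).
have suppP i x : F i x -> List.In x (supp i) := proj2_sig (cid (Ffin i)) x.
pose used k := iter k (fun U => U ++ supp (next U)) nil.
have used_mono j k x : (j <= k)%N -> List.In x (used j) -> List.In x (used k).
  elim: k => [|k IH]; first by rewrite leqn0 => /eqP ->.
  rewrite leq_eqVlt => /orP [/eqP -> //|jk] xj.
  by apply: List.in_or_app; left; exact: IH.
exists (fun k => next (used k)); split => [n|]; first exact: next_P.
apply: ltn_trivIset => n m mn; apply/seteqP; split => // x [Fm Fn].
apply: (next_avoid (used n) x) Fn; apply: (used_mono m.+1) => //.
by apply: List.in_or_app; right; exact: suppP.
Qed.

(** * Cylinders *)

Section CantorCube.
Variable W : Type.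

Definition indicator (S : set W) : cantor_cube W := fun w => `[< S w >].

Lemma indicator_eq (S T : set W) k : indicator S k = indicator T k <-> (S k <-> T k).
Proof. by split; [exact: asbool_eq_equiv | exact: asbool_equiv_eq]. Qed.

Lemma indicator_sigma (S : set W) : finite_set S -> indicator S \in @sigma_set W.
Proof.
move=> finS; apply: mem_set; rewrite /sigma_set /=.
suff -> : [set w | indicator S w = true] = S by [].
by apply/seteqP; split => w /=; [move/asboolP | move=> Sw; apply/asboolP].
Qed.

Definition cylinder (f : cantor_cube W) (l : list W) : set (cantor_cube W) :=
  [set g | forall k, List.In k l -> g k = f k].

Let cylinder_filter (f : cantor_cube W) :
  Filter [set V : set (cantor_cube W) | exists l, cylinder f l `<=` V].
Proof.
constructor; first by exists nil.
- move=> P Q [l1 h1] [l2 h2]; exists (l1 ++ l2) => g hg; split.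
  + by apply: h1 => k hk; apply: hg; apply: List.in_or_app; left.
  + by apply: h2 => k hk; apply: hg; apply: List.in_or_app; right.
- by move=> P Q PQ [l h]; exists l => g /h /PQ.
Qed.

(* The product topology is the supremum of the initial topologies of the
   projections, so it suffices to refine each of those by cylinders. *)
Lemma nbhs_cylinder_sub (f : cantor_cube W) (V : set (cantor_cube W)) :
  nbhs f V -> exists l, cylinder f l `<=` V.
Proof.
have [_ /[apply]] := @cvg_sup _ _
  (fun i => Topological.class (initial_topology (fun f : W -> bool => f i)))
  _ f (cylinder_filter f).
apply=> i A; rewrite nbhs_simpl (@nbhsE (initial_topology (fun f : W -> bool => f i)) f).
move=> /= -[B [] [] O _ OB Bf BA].
exists [:: i] => g gf; apply: BA; rewrite -OB /= (gf i (or_introl erefl)).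
by rewrite -OB in Bf.
Qed.

Lemma nbhs_cylinder (f : cantor_cube W) l : nbhs f (cylinder f l).
Proof.
elim: l => [|a l IH].
  suff -> : cylinder f nil = setT by exact: filterT.
  by apply/seteqP; split => // g _ k [].
have fa : nbhs f [set g : cantor_cube W | g a = f a].
  by apply: (@proj_continuous {classic W} (fun _ => bool) a f [set f a]).
apply: filterS (filterI fa IH) => g [ga gl] k [<-|/gl] //.
Qed.

Definition sigma_space := set_type (@sigma_set W).

Definition subcylinder (p : sigma_space) l : set sigma_space :=
  [set q | cylinder (val p) l (val q)].

Lemma nbhs_subcylinder (p : sigma_space) l : nbhs p (subcylinder p l).
Proof. exact: (@initial_continuous sigma_space _ val p _ (nbhs_cylinder _ l)). Qed.

Lemma nbhs_subcylinder_sub (p : sigma_space) U :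
  nbhs p U -> exists l, subcylinder p l `<=` U.
Proof.
rewrite nbhsE => /= -[B [] [] O oO OB Bp BU].
have /nbhs_cylinder_sub [l lO] : nbhs (val p) O.
  by apply: open_nbhs_nbhs; split => //; rewrite -OB in Bp.
by exists l => q pq; apply: BU; rewrite -OB; exact: lO.
Qed.

Lemma open_subcylinder (p : sigma_space) l : open (subcylinder p l).
Proof.
rewrite openE => q pq; suff -> : subcylinder p l = subcylinder q l.
  exact: nbhs_subcylinder.
by apply/seteqP; split => r hr k hk; rewrite hr // pq.
Qed.

End CantorCube.

(** * The order omega_1 *)

Section Omega1.
Variables (W : Type) (ltw : W -> W -> Prop).
Hypothesis omega1 : is_omega1 ltw.

Lemma ltw_irr x : ~ ltw x x.
Proof. by case: omega1. Qed.

Lemma ltw_trans x y z : ltw x y -> ltw y z -> ltw x z.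
Proof. by case: omega1 => _ [+ _]; apply. Qed.

Lemma ltw_total x y : ltw x y \/ x = y \/ ltw y x.
Proof. by case: omega1 => _ [_ [+ _]]; apply. Qed.

Lemma ltw_wf : well_founded ltw.
Proof. by case: omega1 => _ [_ [_ []]]. Qed.

Definition lew a b := ltw a b \/ a = b.

Lemma not_ltw a b : ~ ltw a b -> lew b a.
Proof. by case: (ltw_total a b) => [ab|[->|ba]] nab; [case: nab|right|left]. Qed.

Lemma ltw_lew_trans a b c : ltw a b -> lew b c -> ltw a c.
Proof. by move=> ab [bc|<-] //; exact: ltw_trans ab bc. Qed.

Lemma lew_ltw_trans a b c : lew a b -> ltw b c -> ltw a c.
Proof. by move=> [ab|->] bc //; exact: ltw_trans ab bc. Qed.

Lemma lew_not_gtw a b : lew a b -> ~ ltw b a.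
Proof. by move=> ab ba; apply: (@ltw_irr a); exact: lew_ltw_trans ab ba. Qed.

Lemma countable_lew x : countable [set y | lew y x].
Proof.
have -> : [set y | lew y x] = [set y | ltw y x] `|` [set x] by [].
by apply: countable_setU; [case: omega1 => _ [_ [_ [_ []]]] | exact: countable1].
Qed.

Lemma countable_bounded (Y : set W) : countable Y -> exists u, forall y, Y y -> ltw y u.
Proof.
move=> cY; apply: contrapT => unbounded.
case: omega1 => _ [_ [_ [_ [+ _]]]]; apply.
have : [set: W] `<=` \bigcup_(y in Y) [set z | lew z y].
  move=> u _; apply: contrapT => nu; apply: unbounded; exists u => y Yy.
  by apply: contrapT => yu; apply: nu; exists y => //; exact: not_ltw.
move=> /subset_card_le/sub_countable; apply.
by apply: bigcup_countable => // y _; exact: countable_lew.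
Qed.

Lemma list_bounded (l : list W) : exists u, forall k, List.In k l -> ltw k u.
Proof. exact/countable_bounded/finite_set_countable/(@finite_set_list _ _ l). Qed.

Lemma seq_bounded (f : nat -> W) : exists u, forall n, ltw (f n) u.
Proof.
have [u ub] := countable_bounded
  (card_le_trans (card_image_le f _) (countableP [set: nat])).
by exists u => n; apply: ub; exists n.
Qed.

Definition upper (l : list W) : W := proj1_sig (cid (list_bounded l)).

Lemma upper_gt l k : List.In k l -> ltw k (upper l).
Proof. exact: (proj2_sig (cid (list_bounded l))). Qed.

Lemma ltw_min (P : W -> Prop) :
  (exists x, P x) -> exists m, P m /\ forall y, P y -> ~ ltw y m.
Proof.
move=> [x Px]; apply: contrapT => nomin.
elim/(well_founded_induction ltw_wf): x Px => x IH Px.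
by apply: nomin; exists x; split => // y Py yx; exact: IH yx Py.
Qed.

Let succ_spec a :=
  ltw_min (ex_intro (ltw a) (upper [:: a]) (@upper_gt [:: a] a (or_introl erefl))).

Definition succ (a : W) : W := proj1_sig (cid (succ_spec a)).

Lemma succ_gt a : ltw a (succ a).
Proof. by case: (proj2_sig (cid (succ_spec a))). Qed.

Lemma succ_min a y : ltw a y -> lew (succ a) y.
Proof. by case: (proj2_sig (cid (succ_spec a))) => _ min ay; apply/not_ltw/min. Qed.

Lemma succ_inj : injective succ.
Proof.
have succ_mono a b : ltw a b -> ltw (succ a) (succ b).
  by move=> ab; exact: lew_ltw_trans (succ_min ab) (succ_gt b).
move=> a b e; case: (ltw_total a b) => [/succ_mono|[//|/succ_mono]];
  by rewrite e => /ltw_irr.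
Qed.

(* This includes the least element. *)
Definition limit a := ~ exists b, succ b = a.

Lemma iter_succ_lt a n k : (n < k)%N -> ltw (iter n succ a) (iter k succ a).
Proof.
elim: k => [//|k IH]; rewrite ltnS leq_eqVlt => /orP [/eqP ->|/IH nk] /=.
  exact: succ_gt.
exact: ltw_trans nk (succ_gt _).
Qed.

Lemma iter_succ_inj l m n k :
  limit l -> limit m -> iter n succ l = iter k succ m -> l = m /\ n = k.
Proof.
move=> Ll Lm; elim: n k => [|n IH] [|k] //= e.
- by case: Ll; exists (iter k succ m).
- by case: Lm; exists (iter n succ l).
- by have [-> ->] := IH k (succ_inj e).
Qed.

Lemma limit_decomposition a : exists l n, limit l /\ a = iter n succ l.
Proof.
elim/(well_founded_induction ltw_wf): a => a IH.
have [La|/contrapT [b ba]] := pselect (limit a); first by exists a, 0%N.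
have [l [n [Ll bl]]] := IH b (eq_ind _ _ (succ_gt b) _ ba).
by exists l, n.+1; split => //; rewrite -ba bl.
Qed.

Definition limit_part a : W := proj1_sig (cid (limit_decomposition a)).
Definition finite_part a : nat :=
  proj1_sig (cid (proj2_sig (cid (limit_decomposition a)))).

Lemma limit_partP a :
  limit (limit_part a) /\ a = iter (finite_part a) succ (limit_part a).
Proof. exact: (proj2_sig (cid (proj2_sig (cid (limit_decomposition a))))). Qed.

Lemma limit_part_iter l n :
  limit l -> limit_part (iter n succ l) = l /\ finite_part (iter n succ l) = n.
Proof.
move=> Ll; have [L e] := limit_partP (iter n succ l).
by have [-> ->] := iter_succ_inj L Ll (esym e).
Qed.

Lemma limit_part_le a : lew (limit_part a) a.
Proof.
have [_ {2}->] := limit_partP a.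
by case: finite_part => [|n]; [right | left; exact: (iter_succ_lt _ (ltn0Sn n))].
Qed.

Lemma limit_part_lt a : ~ limit a -> ltw (limit_part a) a.
Proof.
move=> nLa; case: (limit_part_le a) => // e.
by case: nLa; rewrite -e; case: (limit_partP a).
Qed.

Definition closure_points (F : W -> W) : set W :=
  [set a | (exists b, ltw b a) /\ forall b, ltw b a -> ltw (F b) a].

(* The closure point is the supremum of the [F]-iterates of a bound for [a]. *)
Lemma club_closure_points F : club ltw (closure_points F).
Proof.
split; last first.
  move=> a a_gt0 cofin; split => // b ba.
  have [c [[_ Fc] bc ca]] := cofin b ba.
  exact: ltw_trans (Fc b bc) ca.
move=> a.
have bound x : exists u, (forall b, lew b x -> ltw (F b) u) /\ ltw x u.
  have cY : countable (F @` [set b | lew b x] `|` [set x]).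
    apply: countable_setU; last exact: countable1.
    exact: card_le_trans (card_image_le _ _) (countable_lew x).
  have [u ub] := countable_bounded cY.
  by exists u; split => [b bx|]; apply: ub; [left; exists b | right].
have /choice [bnd bndP] := bound.
pose chain k := iter k bnd a.
have [u ub] := seq_bounded chain.
have [c [chain_c cmin]] :=
  ltw_min (ex_intro (fun c => forall k, ltw (chain k) c) u ub).
exists c; split; last exact: (chain_c 0%N).
split; first by exists (chain 0%N).
move=> b bc; have : ~ (forall k, ltw (chain k) b) by move=> h; exact: cmin b h bc.
move=> /existsNP [k /not_ltw kb].
by apply: ltw_trans ((bndP _).1 _ kb) (chain_c k.+1).
Qed.

Lemma closure_point_limit F a :
  (forall b, ltw b (F b)) -> closure_points F a -> limit a.
Proof.
move=> bF [_ Fa] [c ca]; have /Fa cFc : ltw c a by rewrite -ca; exact: succ_gt.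
by apply: (lew_not_gtw (succ_min (bF c))); rewrite ca.
Qed.

Lemma limit_above u : exists d, limit d /\ ltw u d.
Proof.
have [d [Cd ud]] := (club_closure_points succ).1 u.
by exists d; split => //; exact: closure_point_limit succ_gt Cd.
Qed.

Lemma pressing_down (T : set W) (R : W -> W -> Prop) (b0 : W) :
  stationary ltw T ->
  (forall d, T d -> limit d -> ltw b0 d -> exists2 b, ltw b d & R d b) ->
  exists b, forall a, exists d, [/\ ltw a d, ltw b d & R d b].
Proof.
move=> Tst regR.
have /choice [r rP] : forall d, exists b, T d -> limit d -> ltw b0 d -> ltw b d /\ R d b.
  move=> d; have [[b bd Rdb]|nR] := pselect (exists2 b, ltw b d & R d b).
    by exists b.
  by exists d => Td Ld b0d; case: nR; exact: regR.
apply: contrapT => nR.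
have /choice [bnd bndP] : forall b, exists a, forall d, ltw a d -> ltw b d -> ~ R d b.
  move=> b; apply: contrapT => nb; apply: nR; exists b => a; apply: contrapT => na.
  by apply: nb; exists a => d ad bd Rdb; apply: na; exists d.
pose F b := upper [:: bnd b; b; b0].
have [d [Cd Td]] := Tst _ (club_closure_points F).
have Ld : limit d.
  by apply: (@closure_point_limit F) Cd => b; apply: upper_gt; right; left.
have [[c cd] Fd] := Cd.
have b0d : ltw b0 d by apply: ltw_trans (Fd c cd); apply: upper_gt; do 2 right; left.
have [rd Rd] := rP d Td Ld b0d.
by apply: (bndP (r d) d _ rd Rd); apply: ltw_trans (Fd _ rd); apply: upper_gt; left.
Qed.

(** * The sets G a *)

Section Construction.
Variable guess : W -> set W.
Hypothesis guess_sub : forall a, guess a `<=` [set b | ltw b a].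

Definition disjoint_seq_in (h : W -> set W) (Y : set W) :=
  exists f : nat -> W, (forall n, Y (f n) /\ ~ limit (f n)) /\ trivIset setT (h \o f).

Definition chosen_seq l (h : W -> set W) : nat -> W :=
  if pselect (disjoint_seq_in h (guess l)) is left H then proj1_sig (cid H)
  else fun=> l.

Definition attached l (h : W -> set W) n : set W :=
  if pselect (disjoint_seq_in h (guess l)) then h (chosen_seq l h n) else set0.

Definition restrict l (h : W -> set W) b : set W :=
  if pselect (ltw b l) then h b else set0.

(* [G (l + n)] is [{l + n, l}] together with [G] of the [n]-th term of a
   sequence with pairwise disjoint [G]-values inside the guess at [l], if the
   guess contains one.  The sequence depends on [l] only, not on [n]. *)
Definition G_step a (h : W -> set W) : set W :=
  if pselect (limit a) then set0
  else [set a] `|` [set limit_part a] `|` attached (limit_part a) h (finite_part a).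

Definition G : W -> set W :=
  Fix ltw_wf (fun _ => set W) (fun a rec =>
    G_step a (restrict (limit_part a)
      (fun b => if pselect (ltw b a) is left p then rec b p else set0))).

Lemma G_unfold a : G a = G_step a (restrict (limit_part a) G).
Proof.
rewrite /G Fix_eq; last first.
  move=> x f g fg; congr (G_step x (restrict _ _)).
  by apply: functional_extensionality_dep => b; case: pselect => // p; rewrite fg.
congr (G_step a _); apply: functional_extensionality_dep => b; rewrite /restrict.
case: pselect => // bl; case: pselect => // nba.
by case: nba; exact: ltw_lew_trans bl (limit_part_le a).
Qed.

Definition guess_has_seq l := disjoint_seq_in (restrict l G) (guess l).
Definition guess_seq l := chosen_seq l (restrict l G).

Lemma restrictE l b : ltw b l -> restrict l G b = G b.
Proof. by rewrite /restrict; case: pselect. Qed.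

Lemma guess_seqP l : guess_has_seq l ->
  (forall n, guess l (guess_seq l n) /\ ~ limit (guess_seq l n)) /\
  trivIset setT (G \o guess_seq l).
Proof.
rewrite /guess_seq /chosen_seq; case: pselect => // H _.
case: (proj2_sig (cid H)) => inseq tG; split => // i j _ _ /= ij; apply: tG => //=.
by rewrite !restrictE //; apply: guess_sub; [case: (inseq j) | case: (inseq i)].
Qed.

Lemma guess_seq_lt l n : guess_has_seq l -> ltw (guess_seq l n) l.
Proof. by move=> /guess_seqP [/(_ n) [/guess_sub]]. Qed.

Lemma G_limit a : limit a -> G a = set0.
Proof. by move=> La; rewrite G_unfold /G_step; case: pselect. Qed.

Lemma G_succ a x : ~ limit a ->
  (G a x <-> [\/ x = a, x = limit_part a |
                 guess_has_seq (limit_part a) /\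
                 G (guess_seq (limit_part a) (finite_part a)) x]).
Proof.
move=> nLa; rewrite [G a]G_unfold /G_step /attached.
case: (pselect (limit a)) => [//|_] /=; rewrite -/(guess_seq _).
case: (pselect (guess_has_seq (limit_part a))) => [H|nH] /=.
  rewrite restrictE; last exact: guess_seq_lt.
  split => [[[->|->]|Gx]|[->|->|[_ Gx]]]; by [apply: Or31 | apply: Or32 |
    apply: Or33 | left; left | left; right | right].
split => [[[->|->]|[]]|[->|->|[/nH]]] //; by [apply: Or31 | apply: Or32 |
  left; left | left; right].
Qed.

Lemma G_le a x : G a x -> lew x a.
Proof.
elim/(well_founded_induction ltw_wf): a x => a IH x.
have [La|nLa] := pselect (limit a); first by rewrite G_limit.
move/(G_succ x nLa) => [->|->|[H Gx]]; [by right | exact: limit_part_le |].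
have ba := ltw_trans (guess_seq_lt (finite_part a) H) (limit_part_lt nLa).
by left; exact: lew_ltw_trans (IH _ ba _ Gx) ba.
Qed.

Lemma G_finite a : exists l : list W, forall x, G a x -> List.In x l.
Proof.
elim/(well_founded_induction ltw_wf): a => a IH.
have [La|nLa] := pselect (limit a); first by exists nil; rewrite G_limit.
have [H|nH] := pselect (guess_has_seq (limit_part a)).
  have [l Gl] := IH _ (ltw_trans (guess_seq_lt (finite_part a) H) (limit_part_lt nLa)).
  exists [:: a, limit_part a & l] => x /(G_succ x nLa) [->|->|[_ /Gl]];
    by [left | right; left | right; right].
exists [:: a; limit_part a] => x /(G_succ x nLa) [->|->|[]] //;
  by [left | right; left].
Qed.

(* A limit [d] enters [G a] only through some [a' = d + n] occurring in the
   recursive unfolding of [G a]; everything [G a] adds to [G a'] lies above [a']. *)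
Lemma G_limit_mem a d : limit d -> G a d ->
  exists a', [/\ ~ limit a', limit_part a' = d, G a' `<=` G a &
                 forall x, G a x -> G a' x \/ ltw a' x].
Proof.
move=> Ld; elim/(well_founded_induction ltw_wf): a => a IH.
have [La|nLa] := pselect (limit a); first by rewrite G_limit.
move/(G_succ d nLa) => [da|->|[H Gbd]].
- by case: nLa; rewrite -da.
- by exists a; split => // x Gx; left.
set b := guess_seq _ _ in Gbd; have bl : ltw b (limit_part a) := guess_seq_lt _ H.
have ba := ltw_trans bl (limit_part_lt nLa).
have [a' [nLa' a'd Ga'b Gb_above]] := IH b ba Gbd.
have a'b : lew a' b by apply: G_le; apply: Ga'b; apply/(G_succ a' nLa'); apply: Or31.
exists a'; split => // [x /Ga'b Gbx|x /(G_succ x nLa) [->|->|[_ /Gb_above //]]].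
  by apply/(G_succ x nLa); apply: Or33.
- by right; exact: lew_ltw_trans a'b ba.
- by right; exact: lew_ltw_trans a'b bl.
Qed.


Lemma G_sigma a : indicator (G a) \in @sigma_set W.
Proof. by have [l Gl] := G_finite a; exact/indicator_sigma/(finite_set_list Gl). Qed.

Lemma singleton_sigma l : indicator [set l] \in @sigma_set W.
Proof. exact/indicator_sigma/finite_set1. Qed.

Definition G_point a : sigma_space W := exist _ (indicator (G a)) (G_sigma a).
Definition singleton_point l : sigma_space W :=
  exist _ (indicator [set l]) (singleton_sigma l).

Definition Apoints : set (sigma_space W) :=
  [set p | exists2 a, ~ limit a & val p = indicator (G a)].

Definition Dpoints : set (sigma_space W) :=
  [set p | exists2 l, limit l & val p = indicator [set l]].

Lemma Dpoints_discrete : discrete_subset Dpoints.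
Proof.
move=> p [l Ll pl]; exists (subcylinder p [:: l]); split => //.
  exact: open_subcylinder.
apply/seteqP; split => q; last by move=> ->; split => //; exists l.
move=> [pq [l' Ll' ql']]; apply: val_inj.
have := pq l (or_introl erefl); rewrite ql' pl => /indicator_eq [_ /(_ erefl)].
by move=> /= ->.
Qed.

(* On finitely many coordinates, [G (l + n + 1)] looks like [{l}] for large
   [n]: the [l + n + 1] avoid them, and so do the pairwise disjoint
   [G (guess_seq l n)]. *)
Lemma G_succ_approx l K : limit l ->
  exists n, forall k, List.In k K -> (G (iter n.+1 succ l) k <-> k = l).
Proof.
move=> Ll.
have tS : trivIset setT (fun n => [set iter n.+1 succ l]).
  move=> i j _ _ [x [/= xi xj]].
  by have [_ []] := iter_succ_inj (n := i.+1) (k := j.+1) Ll Ll (etrans (esym xi) xj).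
have tG : trivIset setT
    (fun n => [set x | guess_has_seq l /\ G (guess_seq l n.+1) x]).
  move=> i j _ _ [x [[H Gi] [_ Gj]]].
  by case: ((guess_seqP H).2 i.+1 j.+1 I I (ex_intro _ x (conj Gi Gj))).
have [N1 avoidS] := trivIset_eventually_disjoint K tS.
have [N2 avoidG] := trivIset_eventually_disjoint K tG.
pose n := maxn N1 N2; have [nl nn] := limit_part_iter n.+1 Ll.
have nLa : ~ limit (iter n.+1 succ l) by apply; exists (iter n succ l).
exists n => k kK; rewrite (G_succ k nLa) nl nn; split => [[kn|//|[H Gk]]|->].
- by case: (avoidS n (leq_maxl _ _) k kK).
- by case: (avoidG n (leq_maxr _ _) k kK).
- exact: Or32.
Qed.

Lemma Dpoints_closure : Dpoints `<=` closure Apoints.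
Proof.
move=> p [l Ll pl] B /nbhs_subcylinder_sub [K KB].
have [n Gn] := G_succ_approx K Ll.
exists (G_point (iter n.+1 succ l)); split.
  by exists (iter n.+1 succ l) => //; apply; exists (iter n succ l).
by apply: KB => k kK /=; rewrite pl; apply/indicator_eq; rewrite Gn.
Qed.

(** * No discrete refinement *)

Section NoDiscreteRefinement.
Hypothesis guess_stationary :
  forall X : set W, stationary ltw [set a | X `&` [set b | ltw b a] = guess a].
Variable E : set (sigma_space W).
Hypothesis E_sub : E `<=` Apoints.
Hypothesis Dpoints_E : Dpoints `<=` closure E.

Definition Eindex : set W :=
  [set b | ~ limit b /\ exists2 e, E e & val e = indicator (G b)].

Lemma Eindex_near_limit d K : limit d ->
  exists a, [/\ Eindex a, G a d & forall k, List.In k K -> k <> d -> ~ G a k].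
Proof.
move=> Ld; have Dd : Dpoints (singleton_point d) by exists d.
have [e [Ee de]] := Dpoints_E Dd (nbhs_subcylinder (singleton_point d) (d :: K)).
have [a nLa ea] := E_sub Ee.
have Ga k : List.In k (d :: K) -> (G a k <-> k = d).
  by move=> /de; rewrite ea /= => /indicator_eq.
exists a; split; first by split => //; exists e.
- exact/(Ga d (or_introl erefl)).
- by move=> k kK kd /(Ga k (or_intror kK)) /kd.
Qed.

Lemma Eindex_disjoint_seq :
  exists f : nat -> W, (forall n, Eindex (f n)) /\ trivIset setT (G \o f).
Proof.
apply: trivIset_seq_avoiding => [|U]; first exact: G_finite.
have [u Uu] := list_bounded U; have [d [Ld ud]] := limit_above u.
have [a [Ea _ aU]] := Eindex_near_limit U Ld.
exists a; split => // k kU; apply: aU => // kd.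
by have := ltw_trans (Uu k kU) ud; rewrite kd => /ltw_irr.
Qed.

Definition copied_below d b :=
  Eindex b /\ exists a, [/\ Eindex a, G a d & forall x, ltw x d -> (G a x <-> G b x)].

(* At a limit [d] where diamond guesses [Eindex], the guess contains a
   disjoint sequence, so [guess_seq d] is defined; a point of [E] containing
   [d] then agrees below [d] with [G] of a term of that sequence. *)
Lemma copied_below_guess d : limit d ->
  Eindex `&` [set b | ltw b d] = guess d ->
  (exists f : nat -> W,
     (forall n, Eindex (f n) /\ ltw (f n) d) /\ trivIset setT (G \o f)) ->
  exists2 b, ltw b d & copied_below d b.
Proof.
move=> Ld guess_d [f [fd tf]].
have Hd : guess_has_seq d.
  exists f; split => [n|i j _ _ /=].
    by rewrite -guess_d; have [Ef fnd] := fd n; split => //; case: Ef.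
  by rewrite !restrictE; [exact: tf | case: (fd j) | case: (fd i)].
have [a [Ea Gad _]] := Eindex_near_limit nil Ld.
have [a' [nLa' a'd Ga'a Ga_above]] := G_limit_mem Ld Gad.
set b := guess_seq d (finite_part a').
have [[Eb bd] _] : (Eindex `&` [set b | ltw b d]) b /\ ~ limit b.
  by rewrite guess_d; exact: (guess_seqP Hd).1.
have da' : ltw d a' by rewrite -a'd; exact: limit_part_lt.
have Ga'E y : G a' y <-> [\/ y = a', y = d | G b y].
  rewrite (G_succ y nLa') a'd; split => [[->|->|[_ Gy]]|[->|->|Gy]];
    by [apply: Or31 | apply: Or32 | apply: Or33 | apply: Or33; split].
exists b => //; split => //; exists a; split => // x xd; split => [Gax|Gbx].
  case: (Ga_above x Gax) => [/Ga'E [xa'|xd'|//]|a'x].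
  - by have := ltw_trans xd da'; rewrite xa' => /ltw_irr.
  - by move: xd; rewrite xd' => /ltw_irr.
  - by have := ltw_trans xd (ltw_trans da' a'x) => /ltw_irr.
by apply: Ga'a; apply/Ga'E; apply: Or33.
Qed.

(* By pressing down, a single [G b] is copied below cofinally many limits;
   the copies are points of [E] in every neighbourhood of the point of [b]. *)
Lemma E_not_discrete : ~ discrete_subset E.
Proof.
move=> E_disc; have [f [Ef tf]] := Eindex_disjoint_seq.
have [b0 fb0] := seq_bounded f.
have [b copied] : exists b, forall u, exists d, [/\ ltw u d, ltw b d & copied_below d b].
  apply: (pressing_down (R := copied_below) (b0 := b0) (guess_stationary Eindex)).
  move=> d guess_d Ld b0d.
  apply: copied_below_guess Ld guess_d _; exists f; split => // n.
  by split; [exact: Ef | exact: ltw_trans (fb0 n) b0d].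
have [_ [_ _ [[_ [e Ee eb]] _]]] := copied b0.
have [U [oU Ue UE]] := E_disc e Ee.
have [K KU] := nbhs_subcylinder_sub (open_nbhs_nbhs (conj oU Ue)).
have [u Ku] := list_bounded K.
have [d [ud bd [_ [a [[_ [e' Ee' ea]] Gad agree]]]]] := copied u.
have : (U `&` E) e'.
  split => //; apply: KU => k kK /=; rewrite ea eb; apply/indicator_eq.
  exact: agree (ltw_trans (Ku k kK) ud).
rewrite UE => /(f_equal (fun p : sigma_space W => val p d)).
rewrite /= ea eb => /indicator_eq [/(_ Gad) /G_le db _].
exact: lew_not_gtw db bd.
Qed.

End NoDiscreteRefinement.

End Construction.

End Omega1.

Theorem theorem6p10 (W : Type) (lt : W -> W -> Prop) :
  is_omega1 lt -> diamond lt ->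
  ~ DDG (set_type (@sigma_set W)).
Proof.
move=> omega1 [guess [guess_sub guess_stationary]] DDG_sigma.
have [E [E_sub E_disc Dpoints_E]] := DDG_sigma _ _
  (@Dpoints_discrete _ _ omega1) (@Dpoints_closure _ _ omega1 _ guess_sub).
exact: (@E_not_discrete _ _ omega1 _ guess_sub guess_stationary _ E_sub Dpoints_E E_disc).
Qed.
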